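(* Let $H$ be a fixed graph with $k=|V(H)|$ vertices and let $p\in[0,1)$. Then the algorithm $\mathrm{ALG}_p$ for the Delayed $H$-Node-Deletion Problem with predictions is $\bigl(k-p(k-1),\; k+\tfrac{p}{1-p}\bigr)$-competitive; that is, its consistency is at most $k-p(k-1)$ and its robustness is at most $k+p/(1-p)$.
   Context: All graphs are finite, simple and undirected. An induced copy of $H$ in $G$ is an induced subgraph isomorphic to $H$; $G$ is $H$-free if it has none. For $S\subseteq V(G)$, $G-S=G[V(G)\setminus S]$. An online graph $G$ has vertices $v_1,\dots,v_n$ revealed one at a time (with edges to earlier vertices); $G_t=G[\{v_1,\dots,v_t\}]$. Delayed $H$-Node-Deletion Problem: an online algorithm must choose sets $S_1\subseteq S_2\subseteq\dots\subseteq S_n$ with $S_t\subseteq V(G_t)$ such that $G_t-S_t$ is $H$-free for all $t$, where $S_t$ may depend only on $G_t$ (and, with predictions, on $u_1(G),\dots,u_t(G)$). The cost is $|S_n|$. $\mathrm{OPT}(G)$ denotes the minimum size of a set $S\subseteq V(G)$ with $G-S$ $H$-free. Predictions: when $v_t$ is revealed, the algorithm receives a bit $u_t(G)\in\{0,1\}$. The advice is correct if the set of vertices with bit $1$ is a minimum-size set $S$ with $G-S$ $H$-free. An algorithm is $(r,w)$-competitive if there is a constant $\alpha\ge 0$ such that for every online graph $G$: (i) for some correct advice, its cost is at most $r\cdot\mathrm{OPT}(G)+\alpha$, and (ii) for every advice sequence (correct or not), its cost is at most $w\cdot\mathrm{OPT}(G)+\alpha$. The consistency (resp. robustness) is the infimum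 of such $r$ (resp. $w$). Algorithm $\mathrm{ALG}_p$: it maintains counters $d$ and $e$, initially $0$. Deleted vertices are removed permanently. After each vertex is revealed, as long as the remaining graph contains an induced copy of $H$, it picks one such copy (arbitrarily) and applies the first applicable case: (Case 1) If the copy contains no vertex with advice bit $1$ (or such a copy has appeared at some earlier point), then from now on the algorithm deletes all vertices of every copy of $H$ that appears, without changing $d$ or $e$. (Case 2) Else, if $d=0$ or $e/(e+d)>p$: delete all $k$ vertices of the copy and increase $d$ by $1$. (Case 3) Else: delete one vertex of the copy with advice bit $1$ (the earliest-revealed such vertex) and increase $e$ by $1$. This is repeated until the remaining graph is $H$-free before the next vertex is revealed. *)

From HB Require Import structures.
From mathcomp Require Import all_boot all_order all_algebra.
From mathcomp Require Import reals.

Set Implicit Arguments.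
Unset Strict Implicit.
Unset Printing Implicit Defensive.

Import Order.TTheory GRing.Theory Num.Theory.
Local Open Scope ring_scope.

(* Conventions.
   - The pattern graph H has vertex set 'I_k with adjacency eH (symmetric,
     irreflexive).
   - An online graph G on n vertices has vertex set 'I_n with adjacency adj
     (symmetric, irreflexive); vertex v_(i+1) of the paper is the ordinal i,
     i.e. vertices are revealed in the order 0, 1, ..., n-1, and
     G_t is the subgraph induced by [set v | v < t]. *)

Definition is_copy (k n : nat) (eH : rel 'I_k) (adj : rel 'I_n)
    (X : {set 'I_n}) (f : 'I_k -> 'I_n) : bool :=
  [&& injectiveb f, [forall i, f i \in X] &
      [forall i, forall j, (i != j) ==> (adj (f i) (f j) == eH i j)]].

Definition H_free (k n : nat) (eH : rel 'I_k) (adj : rel 'I_n)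
    (X : {set 'I_n}) : Prop :=
  forall f : 'I_k -> 'I_n, ~~ is_copy eH adj X f.

Definition copy_set (k n : nat) (f : 'I_k -> 'I_n) : {set 'I_n} :=
  [set f i | i : 'I_k].

Definition hitting (k n : nat) (eH : rel 'I_k) (adj : rel 'I_n)
    (S : {set 'I_n}) : Prop :=
  H_free eH adj (~: S).

Definition is_OPT (k n : nat) (eH : rel 'I_k) (adj : rel 'I_n) (m : nat) : Prop :=
  (exists S, hitting eH adj S /\ #|S| = m) /\
  (forall S, hitting eH adj S -> (m <= #|S|)%N).

Definition correct_advice (k n : nat) (eH : rel 'I_k) (adj : rel 'I_n)
    (u : 'I_n -> bool) : Prop :=
  hitting eH adj [set v | u v] /\
  (forall S, hitting eH adj S -> (#|[set v | u v]| <= #|S|)%N).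

(* State of ALG_p: deleted set, counters d and e, and whether Case 1 has
   been triggered ("from now on delete every copy entirely"). *)
Record alg_state (n : nat) := AlgState {
  del : {set 'I_n};
  dcnt : nat;
  ecnt : nat;
  mode : bool }.

Definition revealed (n t : nat) : {set 'I_n} := [set v : 'I_n | (v < t)%N].

Definition avail (n t : nat) (s : alg_state n) : {set 'I_n} :=
  revealed n t :\: del s.

Definition is_earliest_one (n : nat) (u : 'I_n -> bool) (C : {set 'I_n})
    (v : 'I_n) : Prop :=
  [/\ v \in C, u v & forall w, w \in C -> u w -> (v <= w)%N].

Inductive alg_step (R : realType) (k n : nat) (eH : rel 'I_k) (adj : rel 'I_n)
    (p : R) (u : 'I_n -> bool) (t : nat) : alg_state n -> alg_state n -> Prop :=
| AlgCase1 (s : alg_state n) (f : 'I_k -> 'I_n) :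
    is_copy eH adj (avail t s) f ->
    mode s || [forall i, ~~ u (f i)] ->
    alg_step eH adj p u t s
      (AlgState (del s :|: copy_set f) (dcnt s) (ecnt s) true)
| AlgCase2 (s : alg_state n) (f : 'I_k -> 'I_n) :
    is_copy eH adj (avail t s) f ->
    ~~ mode s -> [exists i, u (f i)] ->
    (dcnt s = 0%N \/ p < (ecnt s)%:R / (ecnt s + dcnt s)%:R) ->
    alg_step eH adj p u t s
      (AlgState (del s :|: copy_set f) (dcnt s).+1 (ecnt s) (mode s))
| AlgCase3 (s : alg_state n) (f : 'I_k -> 'I_n) (v : 'I_n) :
    is_copy eH adj (avail t s) f ->
    ~~ mode s -> [exists i, u (f i)] ->
    dcnt s <> 0%N -> (ecnt s)%:R / (ecnt s + dcnt s)%:R <= p ->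
    is_earliest_one u (copy_set f) v ->
    alg_step eH adj p u t s
      (AlgState (v |: del s) (dcnt s) (ecnt s).+1 (mode s)).

Inductive alg_process (R : realType) (k n : nat) (eH : rel 'I_k)
    (adj : rel 'I_n) (p : R) (u : 'I_n -> bool) (t : nat)
    : alg_state n -> alg_state n -> Prop :=
| ProcDone (s : alg_state n) :
    H_free eH adj (avail t s) -> alg_process eH adj p u t s s
| ProcStep (s s' s'' : alg_state n) :
    alg_step eH adj p u t s s' -> alg_process eH adj p u t s' s'' ->
    alg_process eH adj p u t s s''.

(* alg_run t s : s is a possible state of ALG_p after the first t vertices
   have been revealed and processed (over all arbitrary choices of copies). *)
Inductive alg_run (R : realType) (k n : nat) (eH : rel 'I_k) (adj : rel 'I_n)
    (p : R) (u : 'I_n -> bool) : nat -> alg_state n -> Prop :=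
| Run0 : alg_run eH adj p u 0 (AlgState set0 0 0 false)
| RunS (t : nat) (s s' : alg_state n) :
    (t < n)%N -> alg_run eH adj p u t s ->
    alg_process eH adj p u t.+1 s s' -> alg_run eH adj p u t.+1 s'.

(* ALG_p is (r,w)-competitive (for every possible run, i.e. every choice of
   copies); the cost of a run is |S_n| = #|del s| after all n vertices. *)
Definition ALG_competitive (R : realType) (k : nat) (eH : rel 'I_k)
    (p r w : R) : Prop :=
  exists alpha : R, 0 <= alpha /\
  forall (n : nat) (adj : rel 'I_n), symmetric adj -> irreflexive adj ->
  forall opt : nat, is_OPT eH adj opt ->
    (exists u : 'I_n -> bool, correct_advice eH adj u /\
       forall s, alg_run eH adj p u n s ->
         (#|del s|)%:R <= r * opt%:R + alpha) /\
    (forall (u : 'I_n -> bool) s, alg_run eH adj p u n s ->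
         (#|del s|)%:R <= w * opt%:R + alpha).

From HB Require Import structures.
From mathcomp Require Import all_boot all_order all_algebra.
From mathcomp Require Import reals.
From mathcomp Require Import zify lra.
Import Order.TTheory GRing.Theory Num.Theory.
Local Open Scope ring_scope.
Set Implicit Arguments. Unset Strict Implicit.

(* Every copy of H the algorithm handles meets any hitting set S in a vertex not
   yet deleted, and Cases 1-2 delete at most k vertices.  Against an arbitrary
   hitting set S, the number c of copies deleted entirely is therefore at most
   |S|, the cost is at most k c + e, and the rule of Case 3 keeps
   e <= p/(1-p) d + 1 <= p/(1-p) c + 1.  With correct advice S is optimal and
   Case 1 never fires; every Case 2 or 3 then adds a fresh vertex of S, so
   d + e <= OPT, while the rule of Case 2 keeps d <= (1-p)(d+e) + 1, whence the
   cost k d + e = (k-1) d + (d+e) is at most (k - p(k-1)) OPT + k - 1. *)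

Lemma card_setI_setU_gt (T : finType) (A C S : {set T}) w :
  w \in C -> w \in S -> w \notin A -> (#|A :&: S| < #|(A :|: C) :&: S|)%N.
Proof.
move=> wC wS wA; apply: proper_card; apply/properP; split.
  by apply: setSI; apply: subsetUl.
by exists w; rewrite !inE ?wC ?wS ?orbT // (negbTE wA).
Qed.

Section Copies.
Variables (k n : nat) (eH : rel 'I_k) (adj : rel 'I_n).

Lemma copy_mem X f i : is_copy eH adj X f -> f i \in X.
Proof. by case/and3P=> _ /forallP/(_ i). Qed.

Lemma hitting_meets_copy S X f :
  hitting eH adj S -> is_copy eH adj X f -> exists i, f i \in S.
Proof.
move=> hitS /and3P[injf _ copyf].
have [i Si|noS] := pickP (fun i => f i \in S); first by exists i.
case/negP: (hitS f); rewrite /is_copy injf copyf andbT.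
by apply/forallP=> i; rewrite in_setC noS.
Qed.

Lemma card_setU_copy (A : {set 'I_n}) (f : 'I_k -> 'I_n) :
  (#|A :|: copy_set f| <= #|A| + k)%N.
Proof.
rewrite (leq_trans (leq_card_setU _ _)) // leq_add2l.
by rewrite (leq_trans (leq_imset_card _ _)) // card_ord.
Qed.

Lemma copy_avail_undeleted t (s : alg_state n) f v :
  is_copy eH adj (avail t s) f -> v \in copy_set f -> v \notin del s.
Proof.
by move=> copyf /imsetP[i _ ->]; move: (copy_mem i copyf); rewrite inE => /andP[].
Qed.

Lemma delete_copy_hits S t (s : alg_state n) f :
  hitting eH adj S -> is_copy eH adj (avail t s) f ->
  (#|del s :&: S| < #|(del s :|: copy_set f) :&: S|)%N.
Proof.
move=> hitS copyf; have [i Si] := hitting_meets_copy hitS copyf.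
have fi : f i \in copy_set f by apply: imset_f.
exact: card_setI_setU_gt fi Si (copy_avail_undeleted copyf fi).
Qed.

End Copies.

Section Runs.
Variables (R : realType) (k n : nat) (eH : rel 'I_k) (adj : rel 'I_n).
Variables (p : R) (u : 'I_n -> bool).

Lemma alg_run_inv (P : alg_state n -> Prop) :
  P (AlgState set0 0 0 false) ->
  (forall t s s', alg_step eH adj p u t s s' -> P s -> P s') ->
  forall t s, alg_run eH adj p u t s -> P s.
Proof.
move=> P0 Pstep t s; elim=> // t' s0 s1 _ _ Ps0 proc.
by elim: proc Ps0 => // a b c /Pstep step _ IH /step/IH.
Qed.

End Runs.

Section Counters.
Variables (R : realType) (p : R).

Lemma case3_ecnt_bound (d e : nat) :
  d <> 0%N -> e%:R / (e + d)%:R <= p ->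
  (1 - p) * e.+1%:R <= p * d%:R + (1 - p).
Proof.
move=> d0 ep; have de_gt0 : (0 < (e + d)%:R :> R) by rewrite ltr0n; lia.
rewrite ler_pdivrMr // natrD in ep.
rewrite -natr1; lra.
Qed.

Hypotheses (p_ge0 : 0 <= p) (p_lt1 : p < 1).

Lemma case2_dcnt_bound (d e : nat) :
  (d = 0%N \/ p < e%:R / (e + d)%:R) ->
  d.+1%:R <= (1 - p) * (d.+1 + e)%:R + 1.
Proof.
case=> [-> | pe].
  have : 0 <= (1 - p) * (1 + e)%:R by rewrite mulr_ge0 ?subr_ge0 ?ltW.
  lra.
have de_gt0 : (0 < (e + d)%:R :> R).
  rewrite ltr0n lt0n; apply: contraTN pe => /eqP ed0.
  by rewrite ed0 invr0 mulr0 -leNgt.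
rewrite ltr_pdivlMr // natrD in pe.
rewrite addSn -natr1; move: pe p_lt1; lra.
Qed.

End Counters.

Section Robustness.
Variables (R : realType) (k n : nat) (eH : rel 'I_k) (adj : rel 'I_n).
Variables (p : R) (S : {set 'I_n}).
Hypotheses (p_ge0 : 0 <= p) (p_lt1 : p < 1) (hitS : hitting eH adj S).

(* c counts the copies deleted entirely, in Case 1 or Case 2. *)
Definition robust_inv (s : alg_state n) :=
  exists c : nat, [/\ (#|del s| <= k * c + ecnt s)%N, (c <= #|del s :&: S|)%N,
     (dcnt s <= c)%N & (1 - p) * (ecnt s)%:R <= p * (dcnt s)%:R + (1 - p)].

Lemma robust_inv_step u t s s' :
  alg_step eH adj p u t s s' -> robust_inv s -> robust_inv s'.
Proof.
have delete_copy c s0 f : is_copy eH adj (avail t s0) f ->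
    (#|del s0| <= k * c + ecnt s0)%N -> (c <= #|del s0 :&: S|)%N ->
    (#|del s0 :|: copy_set f| <= k * c.+1 + ecnt s0)%N /\
    (c.+1 <= #|(del s0 :|: copy_set f) :&: S|)%N.
  move=> copyf costc cS; split.
    by rewrite (leq_trans (card_setU_copy _ f)) // mulnS; lia.
  exact: leq_ltn_trans cS (delete_copy_hits hitS copyf).
case=> {s s'} [s f copyf _ | s f copyf _ _ _ | s f v copyf _ _ d0 ep [vf _ _]];
  case=> c [cost cS dc ed] /=.
- have [cost' cS'] := delete_copy c s f copyf cost cS.
  by exists c.+1; split; rewrite // ltnW.
- have [cost' cS'] := delete_copy c s f copyf cost cS.
  by exists c.+1; split=> //; rewrite -natr1 mulrDr; move: ed p_ge0; lra.
- exists c; split=> //.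
  + by rewrite cardsU1 (copy_avail_undeleted copyf vf) add1n addnS ltnS.
  + by rewrite (leq_trans cS) // subset_leq_card // setSI // subsetUr.
  + exact: case3_ecnt_bound.
Qed.

Lemma robust_cost u s : alg_run eH adj p u n s ->
  (#|del s|)%:R <= (k%:R + p / (1 - p)) * (#|S|)%:R + 1.
Proof.
move=> run.
have [||c [cost cS dc ed]] := alg_run_inv (P := robust_inv) _ _ run.
- by exists 0%N; rewrite cards0 set0I cards0 !mulr0; split=> //; move: p_lt1; lra.
- by move=> t s1 s2; apply: robust_inv_step.
have cS' : (c <= #|S|)%N by rewrite (leq_trans cS) // subset_leq_card // subsetIr.
set q := p / (1 - p).
have q_ge0 : 0 <= q by rewrite divr_ge0 // subr_ge0 ltW.
have e_le : (ecnt s)%:R <= q * (dcnt s)%:R + 1.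
  rewrite -(ler_pM2l (_ : 0 < 1 - p)); last by rewrite subr_gt0.
  have qE : (1 - p) * q = p by rewrite mulrC divfK // subr_eq0 gt_eqF.
  by rewrite mulrDr mulrA qE mulr1.
have : (#|del s|)%:R <= k%:R * c%:R + (ecnt s)%:R :> R by rewrite -natrM -natrD ler_nat.
have : q * (dcnt s)%:R <= q * (#|S|)%:R by rewrite ler_wpM2l // ler_nat; lia.
have : k%:R * c%:R <= k%:R * (#|S|)%:R :> R by rewrite ler_wpM2l // ler_nat.
lra.
Qed.

End Robustness.

Section Consistency.
Variables (R : realType) (k n : nat) (eH : rel 'I_k) (adj : rel 'I_n).
Variables (p : R) (u : 'I_n -> bool).
Hypotheses (p_ge0 : 0 <= p) (p_lt1 : p < 1).
Hypothesis hitU : hitting eH adj [set v | u v].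

Definition consistent_inv (s : alg_state n) :=
  [/\ (#|del s| <= k * dcnt s + ecnt s)%N,
      (dcnt s + ecnt s <= #|del s :&: [set v | u v]|)%N, ~~ mode s &
      (dcnt s)%:R <= (1 - p) * (dcnt s + ecnt s)%:R + 1].

Lemma consistent_inv_step t s s' :
  alg_step eH adj p u t s s' -> consistent_inv s -> consistent_inv s'.
Proof.
case=> {s s'} [s f copyf case1 | s f copyf _ _ case2 | s f v copyf _ _ _ _ [vf uv _]];
  case=> cost dU m0 de; rewrite /consistent_inv /=.
- have [i Ui] := hitting_meets_copy hitU copyf.
  by move: case1; rewrite (negbTE m0) => /forallP/(_ i); rewrite inE in Ui; rewrite Ui.
- split=> //.
  + by rewrite (leq_trans (card_setU_copy _ f)) // mulnS; lia.
  + by rewrite addSn (leq_trans _ (delete_copy_hits hitU copyf)).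
  + exact: case2_dcnt_bound.
- have vU : v \in [set v | u v] by rewrite inE.
  have vdel := copy_avail_undeleted copyf vf.
  split=> //.
  + by rewrite cardsU1 vdel add1n addnS ltnS.
  + by rewrite addnS setUC (leq_trans _ (card_setI_setU_gt (set11 v) vU vdel)).
  + by rewrite addnS -natr1 mulrDr; move: de p_lt1; lra.
Qed.

Lemma consistent_cost s : (0 < k)%N -> alg_run eH adj p u n s ->
  (#|del s|)%:R <= (k%:R - p * (k%:R - 1)) * (#|[set v | u v]|)%:R + (k%:R - 1).
Proof.
move=> k_gt0 run.
have [||cost dU _ de] := alg_run_inv (P := consistent_inv) _ _ run.
- by rewrite /consistent_inv cards0 set0I cards0 mulr0 add0r; split.
- by move=> t s1 s2; apply: consistent_inv_step.
have := leq_trans dU (subset_leq_card (subsetIr _ _)).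
rewrite -(ler_nat R) natrD => dO; rewrite natrD in de.
move: cost; rewrite -(ler_nat R) natrD natrM.
have K1 : 0 <= k%:R - 1 :> R by rewrite subr_ge0 ler1n.
have rate_ge0 : 0 <= k%:R - p * (k%:R - 1) :> R.
  by rewrite subr_ge0 (le_trans (ler_piMl K1 (ltW p_lt1))) // gerBl.
have := ler_wpM2l K1 de; have := ler_wpM2l rate_ge0 dO.
lra.
Qed.

End Consistency.

Theorem mainTheorem3 (R : realType) (k : nat) (eH : rel 'I_k) (p : R) :
  (0 < k)%N -> symmetric eH -> irreflexive eH -> 0 <= p -> p < 1 ->
  ALG_competitive eH p (k%:R - p * (k%:R - 1)) (k%:R + p / (1 - p)).
Proof.
move=> k_gt0 _ _ p_ge0 p_lt1; have k_ge1 : 1 <= k%:R :> R by rewrite ler1n.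
exists k%:R; split=> // n adj _ _ opt [[S [hitS <-]] minS]; split.
- pose u v := v \in S.
  have US : [set v | u v] = S by apply/setP=> v; rewrite inE.
  have hitU : hitting eH adj [set v | u v] by rewrite US.
  exists u; split; first by rewrite /correct_advice US.
  move=> s run; have := consistent_cost p_ge0 p_lt1 hitU k_gt0 run.
  by rewrite US; lra.
- move=> u s run; have := robust_cost p_ge0 p_lt1 hitS run; lra.
Qed.
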